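(* With $\Psi$, $X,Y$, $A,B,C,D$ and $\alpha,\beta,\gamma,\delta$ as follows, for every real $t$ with $|t|<\|\Psi\|^{-1}$ (where $\|\Psi\|=\sup_{|Z|=1}|\Psi Z|$ is the operator norm) one has $$\kappa(t)=\alpha+\beta t+\gamma t^2+\delta t^3-\tfrac34\sum_{n=4}^\infty t^n\langle\Psi^{n-4}D,D\rangle,$$ and this is the Taylor series of $\kappa$ at $0$. Here $A=[\Psi X,Y]+[X,\Psi Y]$, $B=[\Psi X,\Psi Y]$, $C=[\Psi X,Y]+[\Psi Y,X]$, $D=\Psi^2[X,Y]-\Psi A+B$, $\alpha=\tfrac14|[X,Y]|^2$, $\beta=-\tfrac34\langle\Psi[X,Y],[X,Y]\rangle$, $\gamma=-\tfrac34|\Psi[X,Y]|^2+\tfrac32\langle\Psi[X,Y],A\rangle-\tfrac12\langle[X,Y],B\rangle-\tfrac14|A|^2+\tfrac14|C|^2-\langle[\Psi X,X],[\Psi Y,Y]\rangle$, $\delta=-\tfrac34\langle\Psi^3[X,Y],[X,Y]\rangle+\tfrac32\langle\Psi^2[X,Y],A\rangle-\tfrac32\langle\Psi[X,Y],B\rangle-\tfrac34\langle\Psi A,A\rangle-\tfrac14\langle\Psi C,C\rangle+\langle\Psi[\Psi X,X],[\Psi Y,Y]\rangle+\langle A,B\rangle$.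
   Context: $G$ is a compact Lie group with Lie algebra $\mathfrak g$ and bi-invariant metric $h_0$; $\langle Z_1,Z_2\rangle=h_0(Z_1,Z_2)$, $|Z|^2=\langle Z,Z\rangle$. A left-invariant metric $h$ corresponds to the $h_0$-self-adjoint positive definite $\Phi$ with $h(X,Y)=\langle\Phi X,Y\rangle$ on $\mathfrak g$. An inverse-linear path is $\Phi_t=(I-t\Psi)^{-1}$ with $\Psi$ $h_0$-self-adjoint; $h_t$ is the left-invariant metric with matrix $\Phi_t$. The unnormalized sectional curvature is $k_h(Z_1,Z_2)=h(R_h(Z_1,Z_2)Z_2,Z_1)$, and for fixed $X,Y\in\mathfrak g$, $\kappa(t)=k_{h_t}(\Phi_t^{-1}X,\Phi_t^{-1}Y)$. *)

From HB Require Import structures.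
From mathcomp Require Import all_boot all_order all_algebra.
From mathcomp Require Import all_classical all_reals all_analysis.
Set Implicit Arguments. Unset Strict Implicit. Unset Printing Implicit Defensive.
Import Order.TTheory GRing.Theory Num.Theory.
Import numFieldNormedType.Exports.
Local Open Scope ring_scope.
Local Open Scope classical_set_scope.

Section LieDefs.
Variables (R : realType) (n : nat).
Notation vec := 'cV[R]_n.

(* bi-invariant inner product h0 on g = R^n (orthonormal coordinates) *)
Definition ip (u v : vec) : R := (u^T *m v) 0 0.

(* a Lie bracket on g, ad-invariant for h0 (= Lie algebra of a compact group
   with bi-invariant metric h0) *)
Definition is_compact_lie_bracket (br : vec -> vec -> vec) : Prop :=
  [/\ (forall (a : R) u v w, br (a *: u + v) w = a *: br u w + br v w),
      (forall u v, br u v = - br v u),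
      (forall u v w, br u (br v w) + br v (br w u) + br w (br u v) = 0)
    & (forall u v w, ip (br u v) w = ip u (br v w))].

(* left-invariant metric h(X,Y) = <Phi X, Y> *)
Definition hmet (Phi : 'M[R]_n) (u v : vec) : R := ip (Phi *m u) v.

(* Koszul formula for left-invariant fields:
   2 h(nabla_X Y, Z) = h([X,Y],Z) - h([Y,Z],X) + h([Z,X],Y) *)
Definition koszul br Phi (X Y Z : vec) : R :=
  (hmet Phi (br X Y) Z - hmet Phi (br Y Z) X + hmet Phi (br Z X) Y) / 2.

(* Levi-Civita connection on left-invariant fields: the unique vector V with
   h(V,Z) = koszul X Y Z for all Z (Riesz representation via the basis). *)
Definition nabla br Phi (X Y : vec) : vec :=
  invmx Phi *m \col_i koszul br Phi X Y (delta_mx i 0).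

Definition curv br Phi (X Y Z : vec) : vec :=
  nabla br Phi X (nabla br Phi Y Z) - nabla br Phi Y (nabla br Phi X Z)
  - nabla br Phi (br X Y) Z.

Definition ksec br Phi (Z1 Z2 : vec) : R := hmet Phi (curv br Phi Z1 Z2 Z2) Z1.

Definition Phit (Psi : 'M[R]_n) (t : R) : 'M[R]_n := invmx (1%:M - t *: Psi).

Definition kappa br (Psi : 'M[R]_n) (X Y : vec) (t : R) : R :=
  ksec br (Phit Psi t) (invmx (Phit Psi t) *m X) (invmx (Phit Psi t) *m Y).

Definition opnorm (Psi : 'M[R]_n) : R :=
  sup [set Num.sqrt (ip (Psi *m Z) (Psi *m Z)) | Z in [set Z : vec | ip Z Z = 1]].

Section Coefs.
Variables (br : vec -> vec -> vec) (Psi : 'M[R]_n) (X Y : vec).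
Definition sqn (u : vec) := ip u u.
Definition XY := br X Y.
Definition cA := br (Psi *m X) Y + br X (Psi *m Y).
Definition cB := br (Psi *m X) (Psi *m Y).
Definition cC := br (Psi *m X) Y + br (Psi *m Y) X.
Definition cD := Psi ^+ 2 *m XY - Psi *m cA + cB.
Definition calpha := sqn XY / 4.
Definition cbeta := - (3 / 4) * ip (Psi *m XY) XY.
Definition cgamma :=
  - (3 / 4) * sqn (Psi *m XY) + (3 / 2) * ip (Psi *m XY) cA
  - (1 / 2) * ip XY cB - (1 / 4) * sqn cA + (1 / 4) * sqn cC
  - ip (br (Psi *m X) X) (br (Psi *m Y) Y).
Definition cdelta :=
  - (3 / 4) * ip (Psi ^+ 3 *m XY) XY + (3 / 2) * ip (Psi ^+ 2 *m XY) cA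
  - (3 / 2) * ip (Psi *m XY) cB - (3 / 4) * ip (Psi *m cA) cA
  - (1 / 4) * ip (Psi *m cC) cC
  + ip (Psi *m br (Psi *m X) X) (br (Psi *m Y) Y) + ip cA cB.
Definition coef (k : nat) : R :=
  match k with
  | 0 => calpha | 1 => cbeta | 2 => cgamma | 3 => cdelta
  | (m.+4)%N => - (3 / 4) * ip (Psi ^+ m *m cD) cD
  end.
End Coefs.
End LieDefs.

(* For a left-invariant metric h = <Phi _, _>, the Koszul formula and the
   ad-invariance of <_, _> give Phi nabla_a b = (Phi [a,b] + [a, Phi b] + [b, Phi a]) / 2,
   so the sectional curvature is an explicit expression in brackets, Phi and
   Phi^-1.  Along Phi_t = (I - t Psi)^-1 the inverse Phi_t^-1 is affine in t, and
   after substituting Phi_t^-1 X, Phi_t^-1 Y everything is polynomial in t except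
   one occurrence of Phi_t:
     kappa t = alpha + beta t + gamma t^2 + delta t^3 - 3/4 t^4 <Phi_t D, D>.
   The Neumann series Phi_t = sum_k t^k Psi^k, convergent for |t| |Psi| < 1,
   gives the power series; a power series converging on that disk may be
   differentiated termwise there, so its coefficients are the Taylor
   coefficients of kappa at 0. *)

From HB Require Import structures.
From mathcomp Require Import all_boot all_order all_algebra.
From mathcomp Require Import all_classical all_reals all_analysis.
From mathcomp Require Import ring lra.
Set Implicit Arguments. Unset Strict Implicit. Unset Printing Implicit Defensive.
Import Order.TTheory GRing.Theory Num.Theory.
Import numFieldNormedType.Exports.
Local Open Scope ring_scope.
Local Open Scope classical_set_scope.

Section InnerProduct.
Variables (R : realType) (n : nat).
Implicit Types (u v w : 'cV[R]_n) (M : 'M[R]_n) (a : R).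

Lemma ipE u v : ip u v = \sum_i u i 0 * v i 0.
Proof. by rewrite /ip mxE; apply: eq_bigr => i _; rewrite mxE. Qed.

Lemma ipC u v : ip u v = ip v u.
Proof. by rewrite !ipE; apply: eq_bigr => i _; rewrite mulrC. Qed.

Lemma ipDl u v w : ip (u + v) w = ip u w + ip v w.
Proof. by rewrite !ipE -big_split; apply: eq_bigr => i _; rewrite mxE mulrDl. Qed.

Lemma ipDr u v w : ip w (u + v) = ip w u + ip w v.
Proof. by rewrite ipC ipDl !(ipC w). Qed.

Lemma ipZl a u v : ip (a *: u) v = a * ip u v.
Proof. by rewrite !ipE mulr_sumr; apply: eq_bigr => i _; rewrite mxE mulrA. Qed.

Lemma ipZr a u v : ip v (a *: u) = a * ip v u.
Proof. by rewrite ipC ipZl ipC. Qed.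

Lemma ipNl u v : ip (- u) v = - ip u v.
Proof. by rewrite -scaleN1r ipZl mulN1r. Qed.

Lemma ipNr u v : ip v (- u) = - ip v u.
Proof. by rewrite ipC ipNl ipC. Qed.

Lemma ipBl u v w : ip (u - v) w = ip u w - ip v w.
Proof. by rewrite ipDl ipNl. Qed.

Lemma ipBr u v w : ip w (u - v) = ip w u - ip w v.
Proof. by rewrite ipDr ipNr. Qed.

Lemma ip0l u : ip 0 u = 0.
Proof. by rewrite -(scale0r 0) ipZl mul0r. Qed.

Lemma ip0r u : ip u 0 = 0.
Proof. by rewrite ipC ip0l. Qed.

Lemma ip_mulmx_sym M u v : M^T = M -> ip (M *m u) v = ip u (M *m v).
Proof. by move=> sM; rewrite /ip trmx_mul sM mulmxA. Qed.

Lemma ip_delta_mx u i : ip u (delta_mx i 0) = u i 0.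
Proof. by rewrite /ip -colE !mxE. Qed.

End InnerProduct.

Section CompactLieBracket.
Variables (R : realType) (n : nat) (br : 'cV[R]_n -> 'cV[R]_n -> 'cV[R]_n).
Hypothesis Hbr : is_compact_lie_bracket br.
Implicit Types (u v w : 'cV[R]_n) (a : R).

Lemma br_anti u v : br u v = - br v u.
Proof. by case: Hbr. Qed.

Lemma ip_brA u v w : ip (br u v) w = ip u (br v w).
Proof. by case: Hbr. Qed.

Lemma brDl u v w : br (u + v) w = br u w + br v w.
Proof. by case: Hbr => lin _ _ _; have := lin 1 u v w; rewrite !scale1r. Qed.

Lemma br0l w : br 0 w = 0.
Proof. by have := brDl 0 0 w; rewrite addr0 => h; apply: (addrI (br 0 w)); rewrite addr0 -h. Qed.

Lemma brZl a u w : br (a *: u) w = a *: br u w.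
Proof. by case: Hbr => lin _ _ _; have := lin a u 0 w; rewrite br0l !addr0. Qed.

Lemma brNl u w : br (- u) w = - br u w.
Proof. by rewrite -scaleN1r brZl scaleN1r. Qed.

Lemma brBl u v w : br (u - v) w = br u w - br v w.
Proof. by rewrite brDl brNl. Qed.

Lemma brDr u v w : br w (u + v) = br w u + br w v.
Proof. by rewrite br_anti brDl opprD -!br_anti. Qed.

Lemma brZr a u w : br w (a *: u) = a *: br w u.
Proof. by rewrite br_anti brZl -scalerN -br_anti. Qed.

Lemma brBr u v w : br w (u - v) = br w u - br w v.
Proof. by rewrite brDr -scaleN1r brZr scaleN1r. Qed.

Lemma brxx u : br u u = 0.
Proof.
have /eqP : (2 : R) *: br u u = 0 by rewrite scaler_nat mulr2n {1}br_anti addNr.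
by rewrite scaler_eq0 pnatr_eq0 /= => /eqP.
Qed.

Lemma ip_br_self u v : ip (br u v) u = 0.
Proof. by rewrite br_anti ipNl ip_brA brxx ip0r oppr0. Qed.

End CompactLieBracket.

Section LeviCivita.
Variables (R : realType) (n : nat) (br : 'cV[R]_n -> 'cV[R]_n -> 'cV[R]_n).
Hypothesis Hbr : is_compact_lie_bracket br.
Variable Phi : 'M[R]_n.
Hypotheses (Phi_sym : Phi^T = Phi) (Phi_unit : Phi \in unitmx).
Implicit Types (a b c x y : 'cV[R]_n).

(* [Phi_nabla a b = Phi *m nabla a b]: ad-invariance of the bracket turns the
   Koszul formula into an explicit vector. *)
Definition Phi_nabla a b :=
  (1/2 : R) *: (Phi *m br a b + br a (Phi *m b) + br b (Phi *m a)).

Lemma ip_Phi_br a b c : ip (Phi *m br b c) a = - ip (br b (Phi *m a)) c.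
Proof.
by rewrite ip_mulmx_sym // !ip_brA // (br_anti Hbr (Phi *m a) c) ipNr opprK.
Qed.

Lemma koszulE a b c : koszul br Phi a b c = ip (Phi_nabla a b) c.
Proof.
rewrite /koszul /hmet /Phi_nabla ipZl !ipDl (ip_Phi_br a b c).
have -> : ip (Phi *m br c a) b = ip (br a (Phi *m b)) c.
  by rewrite ip_mulmx_sym // ip_brA // ipC.
ring.
Qed.

Lemma nablaE a b : nabla br Phi a b = invmx Phi *m Phi_nabla a b.
Proof.
congr (_ *m _); apply/matrixP => i j.
by rewrite [LHS]mxE koszulE ip_delta_mx (ord1 j).
Qed.

Lemma hmet_nabla a b c : hmet Phi (nabla br Phi a b) c = ip (Phi_nabla a b) c.
Proof. by rewrite /hmet nablaE mulmxA mulmxV // mul1mx. Qed.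

Lemma hmetBl a b c : hmet Phi (a - b) c = hmet Phi a c - hmet Phi b c.
Proof. by rewrite /hmet mulmxBr ipBl. Qed.

Lemma Phi_nabla_skew a b c : ip (Phi_nabla b c) a = - ip (Phi_nabla b a) c.
Proof.
rewrite /Phi_nabla !ipZl !ipDl (ip_Phi_br a b c) (ip_Phi_br c b a).
have -> : ip (br c (Phi *m b)) a = - ip (br a (Phi *m b)) c.
  by rewrite ip_brA // [in RHS]ipC [in RHS](br_anti Hbr a) ipNr opprK.
ring.
Qed.

Lemma Phi_nabla_diag y : Phi_nabla y y = br y (Phi *m y).
Proof.
rewrite /Phi_nabla brxx // mulmx0 add0r scalerDr -scalerDl.
by rewrite (_ : 1/2 + 1/2 = 1) ?scale1r //; field.
Qed.

Lemma ip_Phi_nabla_self a b : ip (Phi_nabla a b) a = ip b (br (Phi *m a) a).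
Proof.
rewrite /Phi_nabla ipZl !ipDl ip_br_self // addr0 (ip_brA Hbr b).
have -> : ip (Phi *m br a b) a = ip b (br (Phi *m a) a).
  rewrite ip_mulmx_sym // (br_anti Hbr a b) ipNl ip_brA //.
  by rewrite (br_anti Hbr a (Phi *m a)) ipNr opprK.
by field.
Qed.

Lemma ksec_Phi_nabla x y : ksec br Phi x y =
  ip (invmx Phi *m br y (Phi *m y)) (br (Phi *m x) x)
  + ip (Phi_nabla y x) (invmx Phi *m Phi_nabla x y)
  - ip (Phi_nabla (br x y) y) x.
Proof.
rewrite /ksec /curv !hmetBl !hmet_nabla ip_Phi_nabla_self nablaE Phi_nabla_diag.
by rewrite Phi_nabla_skew nablaE ipC opprK.
Qed.

End LeviCivita.

Section InverseLinearPath.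
Variables (R : realType) (n : nat) (br : 'cV[R]_n -> 'cV[R]_n -> 'cV[R]_n).
Hypothesis Hbr : is_compact_lie_bracket br.
Variables (Psi : 'M[R]_n) (X Y : 'cV[R]_n) (t : R).
Hypothesis Psi_sym : Psi^T = Psi.
Implicit Types u : 'cV[R]_n.
Let Q := 1%:M - t *: Psi.
Hypothesis Q_unit : Q \in unitmx.
Let Phi := invmx Q.

Let Phi_sym : Phi^T = Phi.
Proof. by rewrite /Phi trmx_inv /Q linearB /= trmx1 linearZ /= Psi_sym. Qed.
Let Phi_unit : Phi \in unitmx.
Proof. by rewrite /Phi unitmx_inv. Qed.
Let PhiQ u : Phi *m (Q *m u) = u.
Proof. by rewrite mulmxA mulVmx // mul1mx. Qed.
Let QPhi u : Q *m (Phi *m u) = u.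
Proof. by rewrite mulmxA mulmxV // mul1mx. Qed.
Let QE u : Q *m u = u - t *: (Psi *m u).
Proof. by rewrite /Q mulmxBl mul1mx -scalemxAl. Qed.

Let w0 := br X Y.
Let A := cA br Psi X Y.
Let B := cB br Psi X Y.
Let C := cC br Psi X Y.
Let D := cD br Psi X Y.
Let p := br (Psi *m X) X.
Let q := br (Psi *m Y) Y.
Let x := Q *m X.
Let y := Q *m Y.
Let w := br x y.

Lemma kappa_Phi_nabla : kappa br Psi X Y t =
   ip (Q *m br y Y) (br X x)
  + ip (Phi_nabla br Phi y x) (Q *m Phi_nabla br Phi x y)
  - ip (Phi_nabla br Phi w y) x.
Proof. by rewrite /kappa /Phit invmxK ksec_Phi_nabla // /Phi invmxK !PhiQ. Qed.

Lemma bracket_pathE : w = w0 - t *: A + t ^+ 2 *: B.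
Proof.
rewrite /w /x /y !QE (brBl Hbr) !(brBr Hbr) !(brZl Hbr) !(brZr Hbr).
by apply/matrixP => i j; rewrite !(mxE, scalerA); ring.
Qed.

Lemma cross_bracketCE : br x Y + br y X = - (t *: C).
Proof.
rewrite /x /y !QE !(brBl Hbr) !(brZl Hbr) /C /cC (br_anti Hbr Y X).
by rewrite scalerDr opprD addrACA subrr add0r.
Qed.

Lemma cross_bracketAE : br y X + br Y x = - ((2 : R) *: w0) + t *: A.
Proof.
rewrite /x /y !QE (brBl Hbr) (brBr Hbr) (brZl Hbr) (brZr Hbr) /A /cA /w0.
rewrite (br_anti Hbr Y X) (br_anti Hbr (Psi *m Y) X) (br_anti Hbr Y (Psi *m X)).
by apply/matrixP => i j; rewrite !(mxE, scalerA); ring.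
Qed.

(* [Phi w] is a polynomial in [t] up to the remainder [t^2 Phi D]: apply [Q]. *)
Lemma Phi_bracketE : Phi *m w = w0 + t *: (Psi *m w0 - A) + t ^+ 2 *: (Phi *m D).
Proof.
suff -> : w = Q *m (w0 + t *: (Psi *m w0 - A) + t ^+ 2 *: (Phi *m D)) by rewrite PhiQ.
rewrite bracket_pathE mulmxDr -scalemxAr QPhi /D /cD QE expr2 -mulmxA.
rewrite !(mulmxDr, mulmxBr, mulmxN, scalerDr, scalerBr, scalerN) -!scalemxAr.
by apply/matrixP => i j; rewrite !(mxE, scalerA); ring.
Qed.

Lemma kappa_term1E :
  ip (Q *m br y Y) (br X x) = - t ^+ 2 * (ip p q - t * ip (Psi *m p) q).
Proof.
rewrite /x /y !QE brBl // brZl // brxx // sub0r brBr // brZr // brxx // sub0r.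
rewrite (br_anti Hbr X) -/p -/q.
rewrite !(ipNl, ipNr, ipZl, ipZr, ipBl, ipBr, mulmxN, scalerN, mulmxBr, mulmxDr).
rewrite -!scalemxAr ?ipZl (ipC q p) (ip_mulmx_sym q p Psi_sym) (ipC q).
ring.
Qed.

Lemma kappa_term2E : ip (Phi_nabla br Phi y x) (Q *m Phi_nabla br Phi x y) =
  (1/4) * (- ip (Phi *m w) w + t ^+ 2 * (ip C C - t * ip (Psi *m C) C)).
Proof.
clearbody C.
have -> : Phi_nabla br Phi y x = (1/2 : R) *: (- (t *: C) - Phi *m w).
  rewrite /Phi_nabla -cross_bracketCE /w /x /y !PhiQ (br_anti Hbr (Q *m Y)) mulmxN.
  by congr (_ *: _); rewrite -addrA addrC (addrC (br (Q *m Y) X)).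
have -> : Phi_nabla br Phi x y = (1/2 : R) *: (Phi *m w - t *: C).
  by rewrite /Phi_nabla -cross_bracketCE /w /x /y !PhiQ addrA.
rewrite -scalemxAr ipZl ipZr mulmxBr QPhi.
rewrite !(ipDl, ipDr, ipBl, ipBr, ipNl, ipNr) (ip_mulmx_sym w (Q *m _) Phi_sym) PhiQ.
rewrite !QE !(ipBl, ipBr, ipZl, ipZr, scalerN, mulmxN) -!scalemxAr.
rewrite !(ipNl, ipNr, ipZl, ipZr) (ipC C w) (ipC C (Psi *m C)).
by field.
Qed.

Lemma kappa_term3E : ip (Phi_nabla br Phi w y) x =
  (1/2) * (ip w (- ((2 : R) *: w0) + t *: A) + ip (Phi *m w) w).
Proof.
rewrite /Phi_nabla ipZl !ipDl -cross_bracketAE ipDr (ip_mulmx_sym _ _ Phi_sym).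
rewrite /x /y !PhiQ !(ip_brA Hbr).
have -> // : ip (Q *m Y) (br (Phi *m w) (Q *m X)) = ip (Phi *m w) w.
  by rewrite ipC (ip_brA Hbr).
Qed.

Lemma kappa_closed_form : kappa br Psi X Y t =
  coef br Psi X Y 0 + coef br Psi X Y 1 * t + coef br Psi X Y 2 * t ^+ 2
  + coef br Psi X Y 3 * t ^+ 3 - (3/4) * t ^+ 4 * ip (Phi *m D) D.
Proof.
rewrite kappa_Phi_nabla kappa_term1E kappa_term2E kappa_term3E.
rewrite /coef /calpha /cbeta /cgamma /cdelta /sqn /XY -/w0 -/A -/B -/C -/D -/p -/q.
have DE : D = Psi ^+ 2 *m w0 - Psi *m A + B by [].
(* without [clearbody] the rewrites below would unfold these abbreviations *)
clearbody w0 A B C D p q.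
have Psi2 : Psi ^+ 2 *m w0 = Psi *m (Psi *m w0) by rewrite expr2 -mulmxA.
have Psi3 : Psi ^+ 3 *m w0 = Psi *m (Psi ^+ 2 *m w0) by rewrite exprS -mulmxA.
have Dw0 : ip D w0 = ip (Psi *m w0) (Psi *m w0) - ip (Psi *m w0) A + ip w0 B.
  rewrite DE !(ipDl, ipBl, ipNl) Psi2 (ip_mulmx_sym (Psi *m w0) w0 Psi_sym).
  by rewrite (ip_mulmx_sym A w0 Psi_sym) (ipC A) (ipC B).
have DPw0 : ip D (Psi *m w0) =
    ip (Psi ^+ 3 *m w0) w0 - ip (Psi ^+ 2 *m w0) A + ip (Psi *m w0) B.
  rewrite DE !(ipDl, ipBl, ipNl) Psi3 -(ip_mulmx_sym (Psi ^+ 2 *m w0) w0 Psi_sym).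
  by rewrite (ip_mulmx_sym A (Psi *m w0) Psi_sym) -Psi2 (ipC A) (ipC B).
have DA : ip D A = ip (Psi ^+ 2 *m w0) A - ip (Psi *m A) A + ip A B.
  by rewrite DE !(ipDl, ipBl, ipNl) (ipC B).
have PhiD : ip (Phi *m w) w = ip (w0 + t *: (Psi *m w0 - A)) w
    + t ^+ 2 * (ip D (w0 + t *: (Psi *m w0 - A)) + t ^+ 2 * ip (Phi *m D) D).
  rewrite {1}Phi_bracketE ipDl ipZl (ip_mulmx_sym D w Phi_sym) Phi_bracketE.
  by rewrite ipDr ipZr (ipC D (Phi *m D)).
rewrite PhiD bracket_pathE.
rewrite !(ipDl, ipDr, ipBl, ipBr, ipZl, ipZr, ipNl, ipNr) Dw0 DPw0 DA.
rewrite (ipC A w0) (ipC B w0) (ipC B A).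
by field.
Qed.

End InverseLinearPath.

Section Norm.
Variables (R : realType) (n : nat).
Implicit Types (u v : 'cV[R]_n) (Psi : 'M[R]_n).

Definition nrm v := Num.sqrt (ip v v).

Lemma ip_ge0 v : 0 <= ip v v.
Proof. by rewrite ipE; apply: sumr_ge0 => i _; rewrite -expr2 sqr_ge0. Qed.

Lemma nrm_ge0 v : 0 <= nrm v.
Proof. exact: sqrtr_ge0. Qed.

Lemma nrm_eq0 v : nrm v = 0 -> v = 0.
Proof.
move=> /eqP; rewrite sqrtr_eq0 ipE => v0; apply/matrixP => i j; rewrite (ord1 j) mxE.
have sq_ge0 k : 0 <= v k 0 * v k 0 by rewrite -expr2 sqr_ge0.
have sum0 : \sum_k v k 0 * v k 0 = 0 by apply/eqP; rewrite eq_le v0 sumr_ge0.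
have /eqP : v i 0 * v i 0 = 0 by apply: (psumr_eq0P _ sum0).
by rewrite mulf_eq0 orbb => /eqP.
Qed.

Lemma nrm0 : nrm 0 = 0.
Proof. by rewrite /nrm ip0l sqrtr0. Qed.

Lemma nrmZ (a : R) v : nrm (a *: v) = `|a| * nrm v.
Proof. by rewrite /nrm ipZl ipZr mulrA -expr2 sqrtrM ?sqr_ge0 // sqrtr_sqr. Qed.

Lemma normr_coord_le v i : `|v i 0| <= nrm v.
Proof.
rewrite -sqrtr_sqr /nrm; apply: ler_wsqrtr; rewrite ipE (bigD1 i) //= expr2.
by rewrite lerDl sumr_ge0 // => k _; rewrite -expr2 sqr_ge0.
Qed.

Lemma normr_ip_le u v : `|ip u v| <= nrm u * \sum_i `|v i 0|.
Proof.
rewrite ipE mulr_sumr; apply: (le_trans (ler_norm_sum _ _ _)).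
by apply: ler_sum => i _; rewrite normrM ler_wpM2r // normr_coord_le.
Qed.

Lemma opnorm_has_ubound Psi :
  has_ubound [set Num.sqrt (ip (Psi *m Z) (Psi *m Z)) | Z in [set Z | ip Z Z = 1]].
Proof.
exists (Num.sqrt (\sum_i (\sum_j `|Psi i j|) ^+ 2)) => _ [Z /= Z1 <-].
apply: ler_wsqrtr; rewrite ipE; apply: ler_sum => i _.
have PsiZ_le : `|(Psi *m Z) i 0| <= \sum_j `|Psi i j|.
  rewrite mxE; apply: (le_trans (ler_norm_sum _ _ _)); apply: ler_sum => j _.
  rewrite normrM -[leRHS]mulr1 ler_wpM2l //.
  by have := normr_coord_le Z j; rewrite /nrm Z1 sqrtr1.
by rewrite expr2; apply: (le_trans (ler_norm _)); rewrite normrM ler_pM.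
Qed.

Lemma opnorm_ge0 Psi : 0 <= opnorm Psi.
Proof.
rewrite /opnorm; set E := (X in sup X).
have [[r Er]|noE] := pselect (exists r, E r).
  apply: le_trans (ub_le_sup (opnorm_has_ubound Psi) Er).
  by case: Er => Z _ <-; exact: sqrtr_ge0.
by rewrite (_ : E = set0) ?sup0 //; apply/seteqP; split => // r Er; apply: noE; exists r.
Qed.

Lemma nrm_mulmx_le Psi v : nrm (Psi *m v) <= opnorm Psi * nrm v.
Proof.
have [/nrm_eq0 ->|nz] := eqVneq (nrm v) 0; first by rewrite mulmx0 nrm0 mulr0.
have v_gt0 : 0 < nrm v by rewrite lt_def nz nrm_ge0.
pose Z := (nrm v)^-1 *: v.
have Z1 : ip Z Z = 1.
  rewrite /Z ipZl ipZr mulrA -expr2 -[ip v v]sqr_sqrtr ?ip_ge0 //.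
  by rewrite exprVn mulVf // expf_neq0.
have /(ub_le_sup (opnorm_has_ubound Psi)) : [set Num.sqrt (ip (Psi *m Z) (Psi *m Z))
    | Z in [set Z | ip Z Z = 1]] (nrm (Psi *m Z)) by exists Z.
rewrite -/(opnorm Psi) /Z -scalemxAr nrmZ ger0_norm ?invr_ge0 ?nrm_ge0 //.
by rewrite ler_pdivrMl // mulrC.
Qed.

Lemma nrm_mulmx_exp_le Psi k v : nrm (Psi ^+ k *m v) <= opnorm Psi ^+ k * nrm v.
Proof.
elim: k => [|k IH]; first by rewrite !expr0 mul1mx mul1r.
rewrite exprS -mulmxA (le_trans (nrm_mulmx_le _ _)) // exprS -mulrA.
by rewrite ler_wpM2l // opnorm_ge0.
Qed.

Lemma unitmx_path Psi (t : R) : Psi^T = Psi -> `|t| * opnorm Psi < 1 ->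
  1%:M - t *: Psi \in unitmx.
Proof.
move=> Psi_sym small; rewrite unitmxE unitfE; apply/negP => /det0P [v v_nz vQ].
have Q_sym : (1%:M - t *: Psi)^T = 1%:M - t *: Psi.
  by rewrite linearB /= trmx1 linearZ /= Psi_sym.
have Qv : (1%:M - t *: Psi) *m v^T = 0 by rewrite -Q_sym -trmx_mul vQ trmx0.
have fixed : v^T = t *: (Psi *m v^T).
  by apply/eqP; rewrite -subr_eq0 scalemxAl -{1}(mul1mx v^T) -mulmxBl Qv.
have : (1 - `|t| * opnorm Psi) * nrm v^T <= 0.
  by rewrite mulrBl mul1r subr_le0 {1}fixed nrmZ -mulrA ler_wpM2l // nrm_mulmx_le.
rewrite pmulr_rle0 ?subr_gt0 // => v_le0.
have /nrm_eq0/(congr1 trmx) : nrm v^T = 0 by apply/eqP; rewrite eq_le v_le0 nrm_ge0.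
by rewrite trmxK trmx0 => v0; rewrite v0 eqxx in v_nz.
Qed.

End Norm.

Section KappaSeries.
Variables (R : realType) (n : nat) (br : 'cV[R]_n -> 'cV[R]_n -> 'cV[R]_n).
Hypothesis Hbr : is_compact_lie_bracket br.
Variables (Psi : 'M[R]_n) (X Y : 'cV[R]_n) (t : R).
Hypotheses (Psi_sym : Psi^T = Psi) (small : `|t| * opnorm Psi < 1).
Let Q := 1%:M - t *: Psi.
Let Phi := invmx Q.
Let D := cD br Psi X Y.
Let c := coef br Psi X Y.

Lemma ip_Phi_shift (u v : 'cV[R]_n) :
  ip u v = ip u (Phi *m v) - t * ip (Psi *m u) (Phi *m v).
Proof.
have QPhi : Q *m (Phi *m v) = v by rewrite mulmxA mulmxV ?mul1mx // unitmx_path.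
by rewrite -{1}QPhi /Q mulmxBl mul1mx -scalemxAl ipBr ipZr (ip_mulmx_sym u _ Psi_sym).
Qed.

(* each induction step peels one Neumann term [t^k <Psi^k D, D>] off [<Phi D, D>] *)
Lemma kappa_partial_sum N : series (fun k => c k * t ^+ k) N.+4 =
  kappa br Psi X Y t + (3/4) * t ^+ 4 * (t ^+ N * ip (Psi ^+ N *m D) (Phi *m D)).
Proof.
elim: N => [|N IH].
  rewrite /series /= !big_nat_recr //= big_geq // add0r.
  rewrite (kappa_closed_form Hbr X Y Psi_sym (unitmx_path Psi_sym small)) -/Q -/Phi -/D.
  by rewrite !expr0 mul1mx (ipC D) !expr1 /=; ring.
rewrite /series /= big_nat_recr //=; move: IH; rewrite /series /= => ->.
have PsiS : Psi *m Psi ^+ N = Psi ^+ N.+1 by rewrite exprS.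
by rewrite (ip_Phi_shift (Psi ^+ N *m D) D) mulmxA PsiS !exprS; ring.
Qed.

Lemma Neumann_remainder_cvg0 :
  (fun N => t ^+ N * ip (Psi ^+ N *m D) (Phi *m D)) @ \oo --> 0.
Proof.
set K := \sum_i `|(Phi *m D) i 0|.
set r := `|t| * opnorm Psi.
have r_ge0 : 0 <= r by rewrite mulr_ge0 // opnorm_ge0.
have r_lt1 : `|r| < 1 by rewrite ger0_norm.
have le_geo N : `|t ^+ N * ip (Psi ^+ N *m D) (Phi *m D)| <= geometric (nrm D * K) r N.
  rewrite /geometric /= normrM normrX /r exprMn.
  apply: (le_trans (ler_wpM2l (exprn_ge0 _ (normr_ge0 t)) (normr_ip_le _ _))).
  rewrite mulrA [nrm D * K * _]mulrC -!mulrA ler_wpM2l ?exprn_ge0 //.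
  by rewrite mulrA ler_wpM2r ?sumr_ge0 ?nrm_mulmx_exp_le.
apply: (@squeeze_cvgr _ _ _ _ (fun N => - geometric (nrm D * K) r N)
  (geometric (nrm D * K) r)).
- by apply: nearW => N; rewrite -ler_norml.
- by rewrite -oppr0; apply: cvgN; exact: cvg_geometric.
- exact: cvg_geometric.
Qed.

Lemma kappa_series_cvg : series (fun k => c k * t ^+ k) @ \oo --> kappa br Psi X Y t.
Proof.
rewrite -(cvg_shiftn 4).
have -> : (fun N => series (fun k => c k * t ^+ k) (N + 4)%N) = (fun N =>
    kappa br Psi X Y t + (3/4) * t ^+ 4 * (t ^+ N * ip (Psi ^+ N *m D) (Phi *m D))).
  by apply/funext => N; rewrite addnC kappa_partial_sum.
have := cvgD (cvg_cst (kappa br Psi X Y t))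
  (cvgM (cvg_cst ((3/4) * t ^+ 4)) Neumann_remainder_cvg0).
by rewrite mulr0 addr0; apply; exact: eventually_filter.
Qed.

End KappaSeries.

Section PseriesDiffs.
Variable R : realType.

(* [(i+1) z^i] is at most the geometric sum [\sum_(k <= i) r^(i-k) z^k]. *)
Lemma natrS_expr_le (z r : R) i : 0 <= z -> z < r ->
  i.+1%:R * z ^+ i <= r ^+ i.+1 / (r - z).
Proof.
move=> z_ge0 zr; have rz_gt0 : 0 < r - z by rewrite subr_gt0.
have r_ge0 : 0 <= r by rewrite (le_trans z_ge0) ?ltW.
rewrite ler_pdivlMr // mulrC.
have geo : i.+1%:R * z ^+ i <= \sum_(k < i.+1) r ^+ (i - k) * z ^+ k.
  have -> : i.+1%:R * z ^+ i = \sum_(k < i.+1) z ^+ i.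
    by rewrite sumr_const card_ord mulr_natl.
  apply: ler_sum => k _; rewrite -{1}(subnK (ltnSE (ltn_ord k))) exprD.
  by rewrite ler_wpM2r ?exprn_ge0 //; apply: lerXn2r; rewrite ?nnegrE // ltW.
apply: (le_trans (ler_wpM2l (ltW rz_gt0) geo)).
by rewrite -[_ * _](subrXX r z i.+1) gerBl exprn_ge0.
Qed.

Lemma is_cvg_series_shiftS (g : R ^nat) :
  cvgn (series g) -> cvgn (series (fun i => g i.+1)).
Proof.
move=> g_cvg; apply/cvg_ex; exists (limn (series g) - g 0).
have -> : series (fun i => g i.+1) = (fun n => series g n.+1 - g 0).
  by apply/funext => k; rewrite /series /= big_nat_recl // addrC addKr.
by apply: cvgB; [rewrite (cvg_shiftS (series g)) | exact: cvg_cst].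
Qed.

Lemma is_cvg_pseries_diffs_inside (f : R ^nat) (x z : R) :
  cvgn (pseries f x) -> `|z| < `|x| -> cvgn (pseries (pseries_diffs f) z).
Proof.
move=> fx_cvg zx; pose r := (`|z| + `|x|) / 2.
have zr : `|z| < r by rewrite /r ltr_pdivlMr // mulrDr mulr1 ltrD2l.
have rx : r < `|x| by rewrite /r ltr_pdivrMr // mulrDr mulr1 ltrD2r.
have r_gt0 : 0 < r by apply: le_lt_trans zr.
have fr_cvg : cvgn (pseries (fun i => `|f i|) r).
  by apply: is_cvg_pseries_inside_norm fx_cvg _; rewrite ger0_norm // ltW.
apply: normed_cvg.
apply: (@series_le_cvg _ _ (fun i => (r - `|z|)^-1 * (`|f i.+1| * r ^+ i.+1))).
- by move=> i; rewrite normr_ge0.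
- by move=> i; rewrite !mulr_ge0 ?invr_ge0 ?subr_ge0 ?exprn_ge0 // ltW.
- move=> i /=; rewrite /pseries_diffs !normrM normr_nat normrX.
  rewrite mulrAC mulrC [leRHS]mulrCA ler_wpM2l //.
  by rewrite [leRHS]mulrC; exact: natrS_expr_le (normr_ge0 z) zr.
- by apply: is_cvg_seriesZ; exact: is_cvg_series_shiftS fr_cvg.
Qed.

Lemma lim_pseries0 (g : R ^nat) : limn (pseries g 0) = g 0.
Proof.
apply: cvg_lim => //; rewrite -cvg_shiftS.
have -> : (fun n => pseries g 0 n.+1) = (fun=> g 0).
  apply/funext => k; rewrite /pseries /series /= big_nat_recl // expr0 mulr1.
  by rewrite big1 ?addr0 // => i _; rewrite expr0n mulr0.
exact: cvg_cst.
Qed.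

Lemma iter_pseries_diffs_fact (c : R ^nat) k m :
  iter k (@pseries_diffs R) c m * (m`!)%:R = ((m + k)`!)%:R * c (m + k)%N.
Proof.
elim: k m => [|k IH] m; first by rewrite addn0 mulrC.
rewrite iterS /pseries_diffs mulrC mulrA -natrM mulnC -factS mulrC IH.
by rewrite addSnnS.
Qed.

End PseriesDiffs.

Section TaylorCoefficients.
Variables (R : realType) (c : R ^nat) (rho : R) (f : R -> R).
Hypothesis rho_ge0 : 0 <= rho.
Hypothesis f_pseries :
  forall x, `|x| * rho < 1 -> series (fun k => c k * x ^+ k) @ \oo --> f x.

Let U (x : R) := `|x| * rho < 1.

Lemma larger_in_disk x : U x -> exists x', `|x| < `|x'| /\ U x'.
Proof.
rewrite /U => Ux; set e := 1 - `|x| * rho.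
have e_gt0 : 0 < e by rewrite subr_gt0.
have rho1_gt0 : 0 < rho + 1 by rewrite ltr_wpDl.
set d := e / (rho + 1).
have d_gt0 : 0 < d by rewrite divr_gt0.
have d_rho : d * rho < e.
  by rewrite -[ltRHS](divfK (lt0r_neq0 rho1_gt0)) -/d ltr_pM2l // ltrDl.
have xd_ge0 : 0 <= `|x| + d by rewrite addr_ge0 // ltW.
exists (`|x| + d); rewrite (ger0_norm xd_ge0) ltrDl mulrDl; split => //.
by rewrite -ltrBrDl.
Qed.

Lemma near_in_disk x : U x -> \forall y \near x, U y.
Proof.
rewrite /U => Ux; set e := (1 - `|x| * rho) / (rho + 1).
have rho1_gt0 : 0 < rho + 1 by rewrite ltr_wpDl.
have e_gt0 : 0 < e by rewrite divr_gt0 ?subr_gt0.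
have eE : e * (rho + 1) = 1 - `|x| * rho by rewrite /e divfK // gt_eqF.
move: (nbhsx_ballx x e e_gt0); apply: filterS => y; rewrite -ball_normE /ball_ /= => xy.
have yx : `|y| <= `|x| + `|x - y|.
  by rewrite -{1}(subKr x y) (le_trans (ler_normD _ _)) // normrN.
have h1 : `|y| * rho <= (`|x| + `|x - y|) * rho by rewrite ler_wpM2r.
have h2 : `|x - y| * rho <= e * rho by rewrite ler_wpM2r // ltW.
nra.
Qed.

Lemma is_cvg_iter_pseries_diffs m x : U x ->
  cvgn (pseries (iter m (@pseries_diffs R) c) x).
Proof.
elim: m x => [|m IH] x Ux; first by apply/cvg_ex; exists (f x); exact: f_pseries.
have [x' [xx' Ux']] := larger_in_disk Ux.
exact: is_cvg_pseries_diffs_inside (IH x' Ux') xx'.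
Qed.

Let F m x := limn (pseries (iter m (@pseries_diffs R) c) x).

Lemma is_derive_iter_pseries m x : U x -> is_derive x 1 (F m) (F m.+1 x).
Proof.
move=> Ux; have [x' [xx' Ux']] := larger_in_disk Ux.
exact (pseries_snd_diffs (is_cvg_iter_pseries_diffs (m := m) Ux')
  (is_cvg_iter_pseries_diffs (m := m.+1) Ux')
  (is_cvg_iter_pseries_diffs (m := m.+2) Ux') xx').
Qed.

Lemma derive1n_pseries k x : U x -> derive1n k f x = F k x.
Proof.
elim: k x => [|k IH] x Ux.
  by apply/esym/cvg_lim => //; exact: f_pseries.
rewrite derive1nS derive1E; apply: derive_val.
apply: near_eq_is_derive (is_derive_iter_pseries k Ux).
by move: (near_in_disk Ux); apply: filterS => y Uy; rewrite IH.
Qed.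

Lemma pseries_derive1n0 k :
  (\forall x \near 0, derivable (derive1n k f) x 1)
  /\ derive1n k f 0 = c k * (k`!)%:R.
Proof.
have U0 : U 0 by rewrite /U normr0 mul0r.
split.
  move: (near_in_disk U0); apply: filterS => x Ux.
  suff: is_derive x 1 (derive1n k f) (F k.+1 x) by case.
  apply: near_eq_is_derive (is_derive_iter_pseries k Ux).
  by move: (near_in_disk Ux); apply: filterS => y Uy; rewrite derive1n_pseries.
rewrite derive1n_pseries // /F lim_pseries0.
by have := iter_pseries_diffs_fact c k 0; rewrite fact0 mulr1 add0n mulrC => ->.
Qed.

End TaylorCoefficients.

Theorem mainTheorem3 (R : realType) (n : nat) (br : 'cV[R]_n -> 'cV[R]_n -> 'cV[R]_n)
  (Psi : 'M[R]_n) (X Y : 'cV[R]_n) :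
  is_compact_lie_bracket br -> Psi^T = Psi ->
  (forall t : R, `|t| * opnorm Psi < 1 ->
     series (fun k : nat => coef br Psi X Y k * t ^+ k) @ \oo --> kappa br Psi X Y t)
  /\
  (forall k : nat,
     (\forall t \near (0 : R), derivable (derive1n k (kappa br Psi X Y)) t 1)
     /\ derive1n k (kappa br Psi X Y) 0 = coef br Psi X Y k * (k`!)%:R).
Proof.
move=> Hbr Psi_sym; split => [t small | k]; first exact: kappa_series_cvg.
by apply: pseries_derive1n0 (opnorm_ge0 Psi) _ k => t small; exact: kappa_series_cvg.
Qed.
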